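(* Let $X\in\mathbb{R}^{n\times d}$ with rows $x_1,\dots,x_n$, weighted by $w\in\mathbb{R}^n_{>0}$, be $\mu$-complex. Let $U$ be a matrix whose columns form an orthonormal basis of the column space of $D_wX$, with rows $U_i$. If $i\in[n]$ and $\beta\in\mathbb{R}^d$ satisfy $x_i\beta\ge 0.5$, then $w_i\,g(x_i\beta)\le 2(1+\mu)\|U_i\|_2\, f_w(X\beta)$.
   Context: $g(z)=\ln(1+e^z)$ and $f_w(X\beta)=\sum_{j=1}^n w_j g(x_j\beta)$. $D_w$ is the diagonal matrix with $(D_w)_{ii}=w_i$. For a vector $v$, $v^+$ and $v^-$ denote the vectors of its positive and negative entries. $\mu_w(X)=\sup_{\beta:\,D_wX\beta\neq0}\|(D_wX\beta)^+\|_1/\|(D_wX\beta)^-\|_1$, and $X$ weighted by $w$ is $\mu$-complex if $\mu_w(X)\le\mu$. *)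

From Stdlib Require Import Reals Lra Lia.
Open Scope R_scope.

Fixpoint rsum (n : nat) (f : nat -> R) : R :=
  match n with
  | O => 0
  | S m => rsum m f + f m
  end.

(* Matrices are functions nat -> nat -> R (entry (i,j)), only indices i<n, j<d matter.
   Vectors are functions nat -> R. *)

Definition g (z : R) : R := ln (1 + exp z).

Definition rowdot (d : nat) (X : nat -> nat -> R) (i : nat) (beta : nat -> R) : R :=
  rsum d (fun j => X i j * beta j).

Definition f_w (n d : nat) (w : nat -> R) (X : nat -> nat -> R) (beta : nat -> R) : R :=
  rsum n (fun j => w j * g (rowdot d X j beta)).

Definition DwXb (d : nat) (w : nat -> R) (X : nat -> nat -> R) (beta : nat -> R) : nat -> R :=
  fun i => w i * rowdot d X i beta.

Definition pos_norm1 (n : nat) (v : nat -> R) : R := rsum n (fun i => Rmax (v i) 0).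
Definition neg_norm1 (n : nat) (v : nat -> R) : R := rsum n (fun i => Rmax (- v i) 0).

Definition vzero (n : nat) (v : nat -> R) : Prop := forall i, (i < n)%nat -> v i = 0.

(* X weighted by w is mu-complex:  mu_w(X) = sup_{beta : D_w X beta <> 0}
   ||(D_wXb)^+||_1 / ||(D_wXb)^-||_1  <= mu.  Unfolded: for each such beta the
   ratio is finite (denominator > 0, otherwise the ratio is +infinity) and <= mu. *)
Definition mu_complex (n d : nat) (w : nat -> R) (X : nat -> nat -> R) (mu : R) : Prop :=
  forall beta : nat -> R,
    ~ vzero n (DwXb d w X beta) ->
    0 < neg_norm1 n (DwXb d w X beta) /\
    pos_norm1 n (DwXb d w X beta) / neg_norm1 n (DwXb d w X beta) <= mu.

Definition orthonormal_cols (n k : nat) (U : nat -> nat -> R) : Prop :=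
  forall a b, (a < k)%nat -> (b < k)%nat ->
    rsum n (fun i => U i a * U i b) = if Nat.eqb a b then 1 else 0.

Definition same_colspace (n d k : nat) (w : nat -> R) (X U : nat -> nat -> R) : Prop :=
  forall v : nat -> R,
    (exists beta : nat -> R, forall i, (i < n)%nat -> v i = DwXb d w X beta i) <->
    (exists c : nat -> R, forall i, (i < n)%nat -> v i = rsum k (fun a => U i a * c a)).

Definition row_norm2 (k : nat) (U : nat -> nat -> R) (i : nat) : R :=
  sqrt (rsum k (fun a => U i a ^ 2)).

(* Write z = D_w X beta, so that w_i x_i beta = z_i.  Since z lies in the column
   space of U, z = U c with ||c||_2 = ||z||_2, and Cauchy-Schwarz gives
   z_i <= ||U_i||_2 ||z||_2 <= ||U_i||_2 ||z||_1 = ||U_i||_2 (||z^+||_1 + ||z^-||_1).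
   Applying mu-complexity to -beta bounds ||z^-||_1 by mu ||z^+||_1, and
   ||z^+||_1 <= f_w(X beta) because max(t, 0) <= g(t).  Finally g(t) <= 2t for
   t >= 1/2 turns w_i g(x_i beta) into at most 2 z_i. *)

From Stdlib Require Import Reals Lra Lia Psatz.
Open Scope R_scope.

Lemma rsum_ext n f h : (forall j, (j < n)%nat -> f j = h j) -> rsum n f = rsum n h.
Proof.
  induction n as [|n IH]; intros H; simpl; [reflexivity|].
  rewrite IH, H; [reflexivity|lia|intros; apply H; lia].
Qed.

Lemma rsum_le n f h : (forall j, (j < n)%nat -> f j <= h j) -> rsum n f <= rsum n h.
Proof.
  induction n as [|n IH]; intros H; simpl; [lra|].
  apply Rplus_le_compat; [apply IH; intros; apply H|apply H]; lia.
Qed.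

Lemma rsum_zero n : rsum n (fun _ => 0) = 0.
Proof. induction n as [|n IH]; simpl; [|rewrite IH]; lra. Qed.

Lemma rsum_nonneg n f : (forall j, (j < n)%nat -> 0 <= f j) -> 0 <= rsum n f.
Proof. intros H. rewrite <- (rsum_zero n). now apply rsum_le. Qed.

Lemma rsum_plus n f h : rsum n (fun j => f j + h j) = rsum n f + rsum n h.
Proof. induction n as [|n IH]; simpl; [|rewrite IH]; lra. Qed.

Lemma rsum_scal n c f : rsum n (fun j => c * f j) = c * rsum n f.
Proof. induction n as [|n IH]; simpl; [|rewrite IH]; lra. Qed.

Lemma rsum_opp n f : rsum n (fun j => - f j) = - rsum n f.
Proof. induction n as [|n IH]; simpl; [|rewrite IH]; lra. Qed.

Lemma rsum_swap n k (F : nat -> nat -> R) :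
  rsum n (fun j => rsum k (fun a => F j a)) = rsum k (fun a => rsum n (fun j => F j a)).
Proof.
  induction n as [|n IH]; simpl.
  - now rewrite rsum_zero.
  - now rewrite IH, <- rsum_plus.
Qed.

Lemma rsum_mul n f h :
  rsum n f * rsum n h = rsum n (fun j => rsum n (fun l => f j * h l)).
Proof.
  rewrite Rmult_comm, <- rsum_scal. apply rsum_ext; intros j _.
  rewrite Rmult_comm, <- rsum_scal. apply rsum_ext; intros; ring.
Qed.

Lemma rsum_delta k a c : (a < k)%nat ->
  rsum k (fun b => c b * (if Nat.eqb a b then 1 else 0)) = c a.
Proof.
  induction k as [|k IH]; intros Ha; simpl; [lia|].
  destruct (Nat.eq_dec a k) as [->|Hne].
  - rewrite Nat.eqb_refl, (rsum_ext k _ (fun _ => 0)), rsum_zero; [lra|].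
    intros j Hj. destruct (Nat.eqb_spec k j); [lia|lra].
  - rewrite IH by lia. destruct (Nat.eqb_spec a k); [lia|lra].
Qed.

(* Lagrange's identity: the double sum of (a_j b_l - a_l b_j)^2 equals 2 (A B - S^2). *)
Lemma rsum_cauchy_schwarz_sq n a b :
  rsum n (fun j => a j * b j) ^ 2
  <= rsum n (fun j => a j ^ 2) * rsum n (fun j => b j ^ 2).
Proof.
  assert (Hlag : 0 <= rsum n (fun j => rsum n (fun l => (a j * b l - a l * b j) ^ 2))).
  { apply rsum_nonneg; intros; apply rsum_nonneg; intros; apply pow2_ge_0. }
  rewrite (rsum_ext n _ (fun j => rsum n (fun l =>
             a j ^ 2 * b l ^ 2 + (b j ^ 2 * a l ^ 2 + -2 * ((a j * b j) * (a l * b l))))))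
    in Hlag by (intros; apply rsum_ext; intros; ring).
  rewrite (rsum_ext n _ (fun j => rsum n (fun l => a j ^ 2 * b l ^ 2)
             + (rsum n (fun l => b j ^ 2 * a l ^ 2)
                + -2 * rsum n (fun l => (a j * b j) * (a l * b l)))))
    in Hlag by (intros; now rewrite !rsum_plus, (rsum_scal n (-2))).
  rewrite !rsum_plus, (rsum_scal n (-2)), <- !rsum_mul in Hlag. nra.
Qed.

Lemma rsum_cauchy_schwarz n a b :
  rsum n (fun j => a j * b j)
  <= sqrt (rsum n (fun j => a j ^ 2)) * sqrt (rsum n (fun j => b j ^ 2)).
Proof.
  rewrite <- sqrt_mult by (apply rsum_nonneg; intros; apply pow2_ge_0).
  apply (Rle_trans _ (Rabs (rsum n (fun j => a j * b j)))); [apply Rle_abs|].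
  rewrite <- (sqrt_pow2 (Rabs _)) by apply Rabs_pos.
  apply sqrt_le_1_alt. rewrite pow2_abs.
  apply rsum_cauchy_schwarz_sq.
Qed.

Lemma orthonormal_cols_norm n k U c : orthonormal_cols n k U ->
  rsum n (fun j => rsum k (fun a => U j a * c a) ^ 2) = rsum k (fun a => c a ^ 2).
Proof.
  intros HU.
  rewrite (rsum_ext n _ (fun j => rsum k (fun a => rsum k (fun b =>
             (c a * c b) * (U j a * U j b))))).
  2:{ intros j _. rewrite <- Rsqr_pow2; unfold Rsqr; rewrite rsum_mul.
      apply rsum_ext; intros; apply rsum_ext; intros; ring. }
  rewrite rsum_swap. apply rsum_ext; intros a Ha.
  rewrite rsum_swap, (rsum_ext k _ (fun b => (c a * c b) * (if Nat.eqb a b then 1 else 0))).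
  - rewrite rsum_delta by exact Ha. ring.
  - intros b Hb. now rewrite rsum_scal, HU.
Qed.

Lemma colspace_entry_le n k U c v i :
  orthonormal_cols n k U ->
  (forall j, (j < n)%nat -> v j = rsum k (fun a => U j a * c a)) -> (i < n)%nat ->
  v i <= row_norm2 k U i * sqrt (rsum n (fun j => v j ^ 2)).
Proof.
  intros HU Hv Hi.
  rewrite (rsum_ext n _ (fun j => rsum k (fun a => U j a * c a) ^ 2))
    by (intros j Hj; now rewrite Hv).
  rewrite orthonormal_cols_norm, Hv by assumption.
  apply rsum_cauchy_schwarz.
Qed.

Lemma rsum_sq_le_sq_rsum_abs n z :
  rsum n (fun j => z j ^ 2) <= rsum n (fun j => Rabs (z j)) ^ 2.
Proof.
  induction n as [|n IH]; simpl in *; [lra|].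
  assert (0 <= rsum n (fun j => Rabs (z j))) by (apply rsum_nonneg; intros; apply Rabs_pos).
  assert (Rabs (z n) * Rabs (z n) = z n * z n) by (rewrite <- Rabs_mult; apply Rabs_pos_eq; nra).
  pose proof (Rabs_pos (z n)). nra.
Qed.

Lemma l2_norm_le_l1_norm n z :
  sqrt (rsum n (fun j => z j ^ 2)) <= rsum n (fun j => Rabs (z j)).
Proof.
  rewrite <- (sqrt_pow2 (rsum n (fun j => Rabs (z j))))
    by (apply rsum_nonneg; intros; apply Rabs_pos).
  apply sqrt_le_1_alt, rsum_sq_le_sq_rsum_abs.
Qed.

Lemma rsum_abs_pos_neg n v :
  rsum n (fun j => Rabs (v j)) = pos_norm1 n v + neg_norm1 n v.
Proof.
  unfold pos_norm1, neg_norm1. rewrite <- rsum_plus. apply rsum_ext; intros j _.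
  unfold Rmax, Rabs. destruct (Rcase_abs (v j)), (Rle_dec (v j) 0), (Rle_dec (- v j) 0); lra.
Qed.

Lemma DwXb_opp d w X beta i : DwXb d w X (fun j => - beta j) i = - DwXb d w X beta i.
Proof.
  unfold DwXb, rowdot. rewrite Ropp_mult_distr_r, <- rsum_opp.
  f_equal. apply rsum_ext; intros; ring.
Qed.

(* Applied to -beta, mu-complexity bounds the negative part by the positive one. *)
Lemma mu_complex_neg_le n d w X mu beta :
  mu_complex n d w X mu -> ~ vzero n (DwXb d w X beta) ->
  0 <= mu /\ neg_norm1 n (DwXb d w X beta) <= mu * pos_norm1 n (DwXb d w X beta).
Proof.
  intros Hmu Hnz.
  set (P := pos_norm1 n (DwXb d w X beta)). set (N := neg_norm1 n (DwXb d w X beta)).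
  destruct (Hmu (fun j => - beta j)) as [HP HNP].
  { intros Hz. apply Hnz. intros i Hi. specialize (Hz i Hi).
    rewrite DwXb_opp in Hz. lra. }
  assert (EN : pos_norm1 n (DwXb d w X (fun j => - beta j)) = N).
  { apply rsum_ext; intros j _. now rewrite DwXb_opp. }
  assert (EP : neg_norm1 n (DwXb d w X (fun j => - beta j)) = P).
  { apply rsum_ext; intros j _. now rewrite DwXb_opp, Ropp_involutive. }
  rewrite EN, EP in HNP. rewrite EP in HP.
  assert (HN : 0 <= N) by (apply rsum_nonneg; intros; apply Rmax_r).
  assert (0 <= N / P) by (apply Rmult_le_pos; [lra|apply Rlt_le, Rinv_0_lt_compat; lra]).
  split; [lra|].
  replace N with (N / P * P) by (field; lra). apply Rmult_le_compat_r; lra.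
Qed.

Lemma Rmax_le_g t : Rmax t 0 <= g t.
Proof.
  pose proof (exp_pos t). unfold g, Rmax. destruct (Rle_dec t 0).
  - rewrite <- ln_1. apply Rlt_le, ln_increasing; lra.
  - rewrite <- (ln_exp t) at 1. apply Rlt_le, ln_increasing; lra.
Qed.

Lemma exp_half_ge : 1.62 <= exp (1/2).
Proof.
  replace (1/2) with (1/16 + (1/16 + (1/16 + (1/16 + (1/16 + (1/16 + (1/16 + 1/16)))))))
    by lra.
  rewrite !exp_plus. pose proof (exp_ineq1_le (1/16)).
  assert (1.0625 ^ 8 <= exp (1/16) ^ 8) by (apply pow_incr; lra).
  simpl in *. lra.
Qed.

(* 1 + e^t <= e^(2t) as soon as e^t exceeds the golden ratio 1.618..., which holds
   for t >= 1/2 since e^(1/2) = 1.648... *)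
Lemma g_le_twice t : 1/2 <= t -> g t <= 2 * t.
Proof.
  intros Ht. unfold g. rewrite <- (ln_exp (2 * t)).
  assert (Hsq : exp (2 * t) = exp t * exp t) by (rewrite <- exp_plus; f_equal; lra).
  assert (exp (1/2) <= exp t)
    by (destruct (Req_dec t (1/2)) as [->|]; [lra|apply Rlt_le, exp_increasing; lra]).
  pose proof exp_half_ge. pose proof (exp_pos t).
  apply Rlt_le, ln_increasing; nra.
Qed.

Lemma pos_norm1_DwXb_le_f_w n d w X beta :
  (forall j, (j < n)%nat -> 0 < w j) -> pos_norm1 n (DwXb d w X beta) <= f_w n d w X beta.
Proof.
  intros hw. apply rsum_le; intros j Hj. unfold DwXb.
  specialize (hw j Hj). set (r := rowdot d X j beta).
  pose proof (Rmax_le_g r). pose proof (Rmax_l r 0). pose proof (Rmax_r r 0).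
  apply Rmax_lub; nra.
Qed.

Theorem lemma7 (n d k : nat) (X : nat -> nat -> R) (w : nat -> R) (mu : R)
  (U : nat -> nat -> R)
  (hw : forall i, (i < n)%nat -> 0 < w i)
  (hmu : mu_complex n d w X mu)
  (hUorth : orthonormal_cols n k U)
  (hUspan : same_colspace n d k w X U) :
  forall (i : nat) (beta : nat -> R),
    (i < n)%nat -> 1/2 <= rowdot d X i beta ->
    w i * g (rowdot d X i beta) <= 2 * (1 + mu) * row_norm2 k U i * f_w n d w X beta.
Proof.
  intros i beta Hi Ht.
  set (t := rowdot d X i beta) in *. set (z := DwXb d w X beta).
  assert (Hzi : z i = w i * t) by reflexivity.
  assert (Hwi := hw i Hi).
  destruct (mu_complex_neg_le n d w X mu beta hmu) as [Hmu0 HNP].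
  { intros Hz. specialize (Hz i Hi). fold z in Hz. nra. }
  destruct (proj1 (hUspan z)) as [c Hc]; [now exists beta|].
  assert (Hentry := colspace_entry_le n k U c z i hUorth Hc Hi).
  pose proof (l2_norm_le_l1_norm n z) as Hl2.
  rewrite rsum_abs_pos_neg in Hl2.
  pose proof (pos_norm1_DwXb_le_f_w n d w X beta hw) as Hf.
  pose proof (g_le_twice t Ht).
  assert (HRn : 0 <= row_norm2 k U i) by apply sqrt_pos.
  fold z in HNP, Hf.
  assert (Hzi_le : z i <= row_norm2 k U i * ((1 + mu) * f_w n d w X beta)).
  { eapply Rle_trans; [exact Hentry|]. apply Rmult_le_compat_l; [exact HRn|]. nra. }
  assert (w i * g t <= 2 * z i) by (rewrite Hzi; nra).
  nra.
Qed.
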